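(* Let $\mathcal{O}$ be the class of finite ordinal potential games, and let $\phi$ assign to each $\Gamma\in\mathcal{O}$ the set $\phi(\Gamma)$ of strongly maximal equilibria of $\Gamma$. Then $\phi$ satisfies: (i) existence: $\phi(\Gamma)\neq\emptyset$ for every $\Gamma\in\mathcal{O}$; (ii) one-person rationality: for every one-player game $\Gamma\in\mathcal{O}$, $\phi(\Gamma)$ is the set of strategies maximizing the player's payoff; (iii) consistency: for every $\Gamma=(I,(S_i),(u_i))\in\mathcal{O}$, every nonempty proper subset $J\subsetneq I$ and every $s^*\in\phi(\Gamma)$, the reduced game $\Gamma^{J,s^*}$ belongs to $\mathcal{O}$ and $s^*_J=(s^*_j)_{j\in J}\in\phi(\Gamma^{J,s^*})$.
   Context: A finite strategic-form game $\Gamma=(I,(S_i)_{i\in I},(u_i)_{i\in I})$ has finite player set $I$, finite nonempty strategy sets $S_i$, utilities $u_i:S\to\mathbb{R}$, $S=\prod_i S_i$; $(s_i',s_{-i})$ denotes $s$ with player $i$'s strategy replaced by $s_i'$. A pure Nash equilibrium is $s\in S$ with $u_i(s)\ge u_i(s_i',s_{-i})$ for all $i$ and $s_i'\in S_i$. A function $P:S\to\mathbb{R}$ is an ordinal potential if for all $i$, $a,b\in S_i$, $\sigma_{-i}\in S_{-i}$: $u_i(a,\sigma_{-i})>u_i(b,\sigma_{-i})\iff P(a,\sigma_{-i})>P(b,\sigma_{-i})$; $\Gamma$ is an ordinal potential game if one exists. The ordinal deployment graph has vertex set $S$ and an arc $(s,s')$, $s'\neq s$, iff $s'=(s_i',s_{-i})$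 for some $i$ with $u_i(s')\ge u_i(s)$. Define $s\succeq s'$ iff there is a directed path (possibly of length $0$) from $s'$ to $s$, and $s\succ s'$ iff $s\succeq s'$ and not $s'\succeq s$. A strongly maximal state is an $s^*$ with no $s$ satisfying $s\succ s^*$. Two states communicate if each is reachable from the other by a directed path. A strongly maximal equilibrium is a strongly maximal state $s$ such that every state communicating with $s$ (including $s$) is a pure Nash equilibrium. For a nonempty proper subset $J\subsetneq I$ and $s\in S$, the reduced game $\Gamma^{J,s}=(J,(S_j)_{j\in J},(w_j)_{j\in J})$ has player set $J$, the same strategy sets $S_j$, and payoffs $w_j(\sigma)=u_j(\sigma,s_{-J})$ for $\sigma\in\prod_{j\in J}S_j$, where $s_{-J}$ are the strategies of the players outside $J$ in $s$. *)

From HB Require Import structures.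
From mathcomp Require Import all_boot all_order all_algebra.
From Stdlib Require Import Relations.Relation_Operators.
Set Implicit Arguments. Unset Strict Implicit. Unset Printing Implicit Defensive.
Import Order.TTheory GRing.Theory Num.Theory.
Local Open Scope ring_scope.

Record game (R : realDomainType) := Game {
  player : finType;
  strat : player -> finType;
  util : player -> {dffun forall i : player, strat i} -> R
}.
Arguments player {R} g.
Arguments strat {R} g i.
Arguments util {R} g i _.

Section GameDefs.
Variable (R : realDomainType) (G : game R).

Definition profile := {dffun forall i : player G, strat G i}.

Definition dev (i : player G) (s t : profile) : Prop :=
  forall j, j != i -> t j = s j.

Definition finite_game : Prop :=
  (0 < #|player G|)%N /\ forall i, (0 < #|strat G i|)%N.

Definition ordinal_potential (P : profile -> R) : Prop :=
  forall i s t, dev i s t -> (util G i s < util G i t <-> P s < P t).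

Definition inO : Prop := finite_game /\ exists P, ordinal_potential P.

Definition nash (s : profile) : Prop :=
  forall i t, dev i s t -> util G i t <= util G i s.

Definition arc (s s' : profile) : Prop :=
  s' <> s /\ exists i, dev i s s' /\ util G i s <= util G i s'.

Definition reach : profile -> profile -> Prop := clos_refl_trans profile arc.

Definition succeq (s s' : profile) : Prop := reach s' s.
Definition succ (s s' : profile) : Prop := succeq s s' /\ ~ succeq s' s.

Definition strongly_maximal (s : profile) : Prop := ~ exists t, succ t s.

Definition communicate (s t : profile) : Prop := reach s t /\ reach t s.

Definition SME (s : profile) : Prop :=
  strongly_maximal s /\ forall t, communicate s t -> nash t.

End GameDefs.

Section Reduced.
Variable (R : realDomainType) (G : game R) (J : {set player G}).

Definition Jplayer : finType := {j : player G | j \in J}.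

Definition Jprofile := {dffun forall j : Jplayer, strat G (val j)}.

(* the full profile (sigma, s_{-J}) *)
Definition extend (s : profile G) (sigma : Jprofile) : profile G :=
  [ffun i => match (i \in J) as b return (i \in J) = b -> strat G i with
             | true => fun H => sigma (exist _ i H)
             | false => fun _ => s i end erefl].

Definition reduced (s : profile G) : game R :=
  @Game R Jplayer (fun j => strat G (val j))
        (fun j sigma => util G (val j) (extend s sigma)).

Definition restrict (s : profile G) : profile (reduced s) :=
  [ffun j : Jplayer => s (val j)].

End Reduced.

From Pilot Require Import Defs.
From HB Require Import structures.
From mathcomp Require Import all_boot all_order all_algebra.
From Stdlib Require Import Relations.Relation_Operators ClassicalEpsilon.
Import Order.TTheory GRing.Theory Num.Theory.
Local Open Scope ring_scope.

(* Along every arc the deviating player does not lose, so an ordinal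
   potential never decreases along paths of the deployment graph.  A state
   whose reachable set is minimal (it exists by finiteness) reaches only
   states that reach it back; hence it is strongly maximal, and any
   profitable deviation from its class would strictly increase the potential
   and still lead back, which is impossible, so the whole class consists of
   Nash equilibria.  With one player, reachability is just weak increase of
   the payoff.  For a reduced game, deployment paths of Gamma^{J,s*} lift to
   paths of Gamma through extend; as long as they stay in the class of s*
   every arc is a deviation between Nash equilibria, hence payoff-neutral and
   reversible, so the lifted path never leaves that class. *)

Set Implicit Arguments.
Unset Strict Implicit.

Lemma exists_preorder_maximal (T : finType) (r : T -> T -> Prop) (x0 : T) :
  (forall x, r x x) -> (forall x y z, r x y -> r y z -> r x z) ->
  exists x, forall y, r x y -> r y x.
Proof.
move=> r_refl r_trans.
pose up x := [set y | is_left (excluded_middle_informative (r x y))].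
have upP x y : reflect (r x y) (y \in up x).
  by rewrite inE; apply: sumboolP.
have card_up : exists n, [exists x, #|up x| == n].
  by exists #|up x0|; apply/existsP; exists x0.
case: (ex_minnP card_up) => m /existsP [x /eqP up_x] m_min.
exists x => y rxy.
have up_sub : up y \subset up x.
  by apply/subsetP => z /upP ryz; apply/upP; apply: r_trans rxy ryz.
have up_le : (#|up x| <= #|up y|)%N.
  by rewrite up_x; apply: m_min; apply/existsP; exists y.
have /eqP up_eq : up y == up x by rewrite eqEcard up_sub up_le.
by apply/upP; rewrite up_eq; apply/upP.
Qed.

Section Deployment.
Variables (R : realDomainType) (G : game R).
Implicit Types (s t : profile G) (P : profile G -> R).

Lemma dev_sym i s t : dev i s t -> dev i t s.
Proof. by move=> dst j ji; rewrite dst. Qed.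

Lemma reach_trans s t u : reach s t -> reach t u -> reach s u.
Proof. exact: rt_trans. Qed.

Lemma potential_reach_le P s t : ordinal_potential P -> reach s t -> P s <= P t.
Proof.
move=> HP; elim=> [x y [_ [i [dxy le_xy]]] | // | x y z _ le_xy _ le_yz].
- by rewrite leNgt -(rwP negP) => /(HP i y x (dev_sym dxy)); rewrite ltNge le_xy.
- exact: le_trans le_xy le_yz.
Qed.

Definition closed_class s := forall t, reach s t -> reach t s.

Lemma closed_strongly_maximal s : closed_class s -> strongly_maximal s.
Proof. by move=> cl_s [t [st nts]]; apply/nts/cl_s. Qed.

Lemma exists_closed_class s0 : exists s, closed_class s.
Proof.
by apply: (exists_preorder_maximal s0) => [s | s t u]; [apply: rt_refl | apply: reach_trans].
Qed.

Lemma closed_class_nash P s t :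
  ordinal_potential P -> closed_class s -> reach s t -> nash t.
Proof.
move=> HP cl_s st i t' dtt'; rewrite leNgt -(rwP negP) => lt_u.
have tt' : reach t t'.
  apply: rt_step; split; last by exists i; split; last exact: ltW.
  by move=> eq_t; rewrite eq_t ltxx in lt_u.
have t't : reach t' t by apply: reach_trans (cl_s _ (reach_trans st tt')) st.
move: (potential_reach_le HP t't); rewrite leNgt => /negP; apply.
exact/(HP i t t' dtt').
Qed.

Lemma closed_class_SME P s :
  ordinal_potential P -> closed_class s -> SME s.
Proof.
move=> HP cl_s; split; first exact: closed_strongly_maximal.
by move=> t [st _]; apply: closed_class_nash HP cl_s st.
Qed.

Lemma exists_SME : inO G -> exists s, SME s.
Proof.
move=> [[_ strat_gt0] [P HP]].
have pick i : {x : strat G i | true} by apply: sigW; apply/card_gt0P.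
have [s cl_s] := exists_closed_class [ffun i => sval (pick i)].
by exists s; apply: closed_class_SME HP cl_s.
Qed.

End Deployment.

Section OnePlayer.
Variables (R : realDomainType) (G : game R) (i0 : player G).
Hypothesis player_eq : forall i j : player G, i = j.
Implicit Types (s t : profile G).

Lemma dev_one_player i s t : dev i s t.
Proof. by move=> j; rewrite (player_eq j i) eqxx. Qed.

Lemma reach_one_player i s t : reach s t <-> util G i s <= util G i t.
Proof.
split=> [|le_st]; last first.
  have [-> | ne_ts] := eqVneq t s; first exact: rt_refl.
  apply: rt_step; split; first exact/eqP.
  by exists i; split=> //; apply: dev_one_player.
elim=> [x y [_ [j [_ le_xy]]] | // | x y z _ le_xy _ le_yz].
- by rewrite (player_eq i j).
- exact: le_trans le_xy le_yz.
Qed.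

Lemma SME_one_player s :
  SME s <-> forall i t, util G i t <= util G i s.
Proof.
split=> [[_ nash_s] i t | s_max].
  have c_ss : communicate s s by split; apply: rt_refl.
  exact: nash_s s c_ss i t (@dev_one_player i s t).
have cl_s : closed_class s.
  by move=> t /(reach_one_player i0) le_st; apply/(reach_one_player i0)/s_max.
split; first exact: closed_strongly_maximal.
move=> t [/(reach_one_player i0) le_st _] i t' _.
by rewrite (player_eq i i0); apply: le_trans (s_max i0 t') le_st.
Qed.

End OnePlayer.

Section Reduced.
Variables (R : realDomainType) (G : game R) (J : {set player G}) (s : profile G).
Implicit Types (a b : profile (reduced J s)).

Lemma extend_val (sigma : Jprofile J) (j : Jplayer J) :
  extend s sigma (val j) = sigma j.
Proof.
case: j => i iJ /=; rewrite ffunE.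
move: (erefl (i \in J)); rewrite {2 3}iJ => iJ'.
by rewrite (bool_irrelevance iJ' iJ).
Qed.

Lemma extend_notin (sigma : Jprofile J) i : i \notin J -> extend s sigma i = s i.
Proof.
move=> iNJ; rewrite ffunE.
by move: (erefl (i \in J)); rewrite {2 3}(negbTE iNJ).
Qed.

Lemma extend_at (sigma : Jprofile J) i (iJ : i \in J) :
  extend s sigma i = sigma (exist _ i iJ).
Proof. exact: (extend_val sigma (exist _ i iJ)). Qed.

Lemma extend_restrict : extend s (restrict J s) = s.
Proof.
apply/ffunP => i; have [iJ | iNJ] := boolP (i \in J).
  by rewrite extend_at ffunE.
by rewrite extend_notin.
Qed.

Lemma extend_inj : injective (@extend R G J s).
Proof.
move=> a b eq_ab; apply/ffunP => j.
by rewrite -!extend_val eq_ab.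
Qed.

Lemma dev_extend j a b : dev j a b -> dev (val j) (extend s a) (extend s b).
Proof.
move=> dab i ij; have [iJ | iNJ] := boolP (i \in J); last by rewrite !extend_notin.
by rewrite !extend_at dab //; apply: contraNneq ij => <-.
Qed.

Lemma reduced_inO : inO G -> J != set0 -> inO (reduced J s).
Proof.
move=> [[_ strat_gt0] [P HP]] /set0Pn [i iJ].
split; first split.
- by apply/card_gt0P; exists (exist _ i iJ).
- by move=> j; apply: strat_gt0.
exists (fun sigma => P (extend s sigma)) => j a b dab.
exact: HP (dev_extend dab).
Qed.

Hypothesis class_nash : forall t, communicate s t -> nash t.

Lemma reduced_arc_communicate a b :
  Defs.arc a b -> communicate s (extend s a) ->
  communicate s (extend s b) /\ Defs.arc b a.
Proof.
move=> [ne_ba [j [dab le_ab]]] [sa as_].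
have le_ba : util G (val j) (extend s b) <= util G (val j) (extend s a).
  exact: (class_nash (conj sa as_) (dev_extend dab)).
have ne_ext : extend s b <> extend s a by move/extend_inj.
have ab : reach (extend s a) (extend s b).
  apply: rt_step; split=> //; exists (val j); split=> //; exact: dev_extend.
have ba : reach (extend s b) (extend s a).
  apply: rt_step; split; first by move=> eq_ab; apply: ne_ext; rewrite eq_ab.
  by exists (val j); split=> //; apply/dev_extend/dev_sym.
split; first by split; [apply: reach_trans sa ab | apply: reach_trans ba as_].
split; first by move=> eq_ab; apply: ne_ba.
by exists j; split=> //; apply: dev_sym.
Qed.

Lemma reduced_reach_communicate a b :
  reach a b -> communicate s (extend s a) ->
  communicate s (extend s b) /\ reach b a.
Proof.
elim=> [x y /reduced_arc_communicate arc_xy /arc_xy [cy yx] | x cx | x y z _ IHxy _ IHyz cx].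
- by split; last apply: rt_step.
- by split; last apply: rt_refl.
- have [cy yx] := IHxy cx; have [cz zy] := IHyz cy.
  by split; last apply: reach_trans zy yx.
Qed.

Lemma SME_restrict : SME (restrict J s).
Proof.
have c_restrict : communicate s (extend s (restrict J s)).
  by rewrite extend_restrict; split; apply: rt_refl.
split.
  by apply: closed_strongly_maximal => t /reduced_reach_communicate /(_ c_restrict) [].
move=> t [/reduced_reach_communicate /(_ c_restrict) [ct _] _] j t' dtt'.
exact: class_nash ct (val j) _ (dev_extend dtt').
Qed.

End Reduced.

Theorem theorem3 (R : realDomainType) :
  (* (i) existence *)
  (forall G : game R, inO G -> exists s : profile G, SME s) /\
  (* (ii) one-person rationality *)
  (forall G : game R, inO G -> #|player G| = 1%N ->
     forall s : profile G,
       SME s <-> (forall (i : player G) (t : profile G), util G i t <= util G i s)) /\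
  (* (iii) consistency *)
  (forall G : game R, inO G ->
     forall J : {set player G}, J != set0 -> J != setT ->
     forall s : profile G, SME s ->
       inO (reduced J s) /\ SME (restrict J s)).
Proof.
split; [|split].
- exact: exists_SME.
- move=> G _ card1 s.
  have /card_gt0P [i0 _] : (0 < #|player G|)%N by rewrite card1.
  apply: (SME_one_player i0) => i j.
  by apply/fintype_le1P; rewrite card1.
- move=> G OG J J_ne0 _ s [_ class_nash].
  by split; [apply: reduced_inO | apply: SME_restrict].
Qed.
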